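(* Let $C$ be a closed convex set in a finite-dimensional Euclidean space. Then: (i) (Transitivity) if $\hat F$ is a face of $F$ and $F$ is a face of $C$, where $F$ is an amenable face of $C$, then $\hat F$ is an amenable face of $F$ if and only if $\hat F$ is an amenable face of $C$; (ii) (Inheritance) if $C$ is amenable, then every face $F$ of $C$ is an amenable convex set; (iii) $C$ is amenable if and only if every maximal face $F$ of $C$ is both an amenable face of $C$ and an amenable convex set by itself.
   Context: A face of a closed convex set $C$ is a closed convex subset $F\subseteq C$ such that whenever $x,y\in C$ and $\alpha x+(1-\alpha)y\in F$ for some $\alpha\in(0,1)$, then $x,y\in F$. A face $F$ of $C$ is maximal if $F\ne C$ and there is no face $\hat F$ of $C$ with $\hat F\ne F$, $\hat F\ne C$ such that $F$ is a face of $\hat F$. A face $F$ of $C$ is amenable if for every bounded set $B$ there exists $\kappa>0$ such that $\operatorname{dist}(x,F)\le\kappa\operatorname{dist}(x,C)$ for all $x\in(\operatorname{aff}F)\cap B$; $C$ is amenable if all its faces are amenable. *)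

From HB Require Import structures.
From mathcomp Require Import all_boot all_order all_algebra.
From mathcomp Require Import all_classical all_reals all_analysis.
Import numFieldNormedType.Exports.
Set Implicit Arguments. Unset Strict Implicit. Unset Printing Implicit Defensive.
Import Order.TTheory GRing.Theory Num.Theory.
Local Open Scope classical_set_scope.
Local Open Scope ring_scope.

Section Defs.
Context {R : realType} {n : nat}.
Notation V := 'rV[R]_n.

Definition enorm (x : V) : R := Num.sqrt (\sum_(i < n) x ord0 i ^+ 2).
Definition edist (x : V) (S : set V) : R := inf [set enorm (x - y) | y in S].

Definition is_convex (S : set V) : Prop :=
  forall x y, S x -> S y -> forall a : R, 0 <= a -> a <= 1 ->
    S (a *: x + (1 - a) *: y).

Definition is_face (F C : set V) : Prop :=
  [/\ closed F, is_convex F, F `<=` C &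
    forall x y (a : R), C x -> C y -> 0 < a -> a < 1 ->
      F (a *: x + (1 - a) *: y) -> F x /\ F y].

Definition is_maximal_face (F C : set V) : Prop :=
  [/\ is_face F C, F <> C &
    ~ (exists Fh, [/\ is_face Fh C, Fh <> F, Fh <> C & is_face F Fh])].

Definition aff (F : set V) : set V :=
  [set x | exists k (s : 'I_k -> V) (l : 'I_k -> R),
     [/\ (forall i, F (s i)), \sum_(i < k) l i = 1 &
         x = \sum_(i < k) l i *: s i]].

Definition ebounded (B : set V) : Prop := exists M : R, forall x, B x -> enorm x <= M.

Definition amenable_face (F C : set V) : Prop :=
  is_face F C /\
  forall B, ebounded B -> exists kappa : R, 0 < kappa /\
    forall x, aff F x -> B x -> edist x F <= kappa * edist x C.

Definition amenable_set (C : set V) : Prop :=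
  forall F, is_face F C -> amenable_face F C.

End Defs.

(* Error bounds compose: for x in aff Fh, which lies in aff F,
   dist(x, Fh) <= k1 dist(x, F) <= k1 k2 dist(x, C); conversely
   dist(x, C) <= dist(x, F) since F lies in C, so an error bound of Fh
   relative to C is one relative to F.  This gives (i) and (ii).  For (iii),
   every proper face G lies in a maximal face: a face F of G contains every
   point of G in aff F, so along a strictly increasing chain of faces the
   affine hulls strictly grow.  Measuring affine dimension as the rank of a
   matrix of homogenised points (x, 1), which is at most n + 1, a proper face
   above G of maximal rank is maximal. *)
From Pilot Require Import Defs.
From HB Require Import structures.
From mathcomp Require Import all_boot all_order all_algebra.
From mathcomp Require Import all_classical all_reals all_analysis.
Import numFieldNormedType.Exports.
From mathcomp Require Import ring.
(* Re-import so that [edist] is Defs.edist, not the analysis library's. *)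
Import Pilot.Defs.
Set Implicit Arguments. Unset Strict Implicit. Unset Printing Implicit Defensive.
Import Order.TTheory GRing.Theory Num.Theory.
Local Open Scope classical_set_scope.
Local Open Scope ring_scope.

Section Faces.
Variables (R : realType) (n : nat).
Notation V := 'rV[R]_n.
Implicit Types (A B C F G : set V) (x y : V).

Lemma face_trans A B C : is_face A B -> is_face B C -> is_face A C.
Proof.
move=> [cA vA AB eA] [cB vB BC eB]; split => // [x /AB /BC //|x y a Cx Cy a0 a1 Axy].
have [Bx By] := eB x y a Cx Cy a0 a1 (AB _ Axy).
exact: eA x y a Bx By a0 a1 Axy.
Qed.

Lemma face_refl C : closed C -> is_convex C -> is_face C C.
Proof. by move=> cC vC; split. Qed.

Lemma face_self F C : is_face F C -> is_face F F.
Proof. by move=> [cF vF _ _]; split. Qed.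

Lemma aff_subset A B : A `<=` B -> aff A `<=` aff B.
Proof.
move=> AB x [k [s [l [As sl ->]]]]; exists k, s, l; split => // i; exact: AB.
Qed.

Lemma aff_nonempty A x : aff A x -> exists y, A y.
Proof.
case=> -[|k] [s [l [As sl _]]]; last by exists (s ord0).
by move: sl; rewrite big_ord0 => /eqP; rewrite eq_sym oner_eq0.
Qed.

Lemma edist_subset A B x : A `<=` B -> (exists y, A y) -> edist x B <= edist x A.
Proof.
move=> AB [y Ay]; apply: lb_le_inf => [|_ [z Az <-]]; first by exists (enorm (x - y)), y.
apply: ge_inf; last by exists z => //; exact: AB.
by exists 0 => _ [w _ <-]; exact: sqrtr_ge0.
Qed.

Lemma amenable_face_refl C : closed C -> is_convex C -> amenable_face C C.
Proof.
move=> cC vC; split; first exact: face_refl.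
by move=> B _; exists 1; split => // x _ _; rewrite mul1r.
Qed.

Lemma amenable_face_trans G F C :
  amenable_face G F -> is_face F C -> amenable_face F C -> amenable_face G C.
Proof.
move=> [GF aG] FC [_ aF]; split; first exact: face_trans GF FC.
move=> B bB; have [k1 [k1p h1]] := aG B bB; have [k2 [k2p h2]] := aF B bB.
exists (k1 * k2); split; first by rewrite mulr_gt0.
move=> x ax Bx; apply: le_trans (h1 x ax Bx) _; rewrite -mulrA; apply: ler_wpM2l; first exact: ltW.
by apply: h2 => //; apply: aff_subset ax; case: GF.
Qed.

Lemma amenable_face_restrict G F C :
  is_face G F -> is_face F C -> amenable_face G C -> amenable_face G F.
Proof.
move=> GF [_ _ FC _] [_ aG]; split => // B bB.
have [k [kp h]] := aG B bB; exists k; split => // x ax Bx.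
apply: le_trans (h x ax Bx) _; apply: ler_wpM2l; first exact: ltW.
apply: edist_subset => //; have [y Gy] := aff_nonempty ax.
by exists y; case: GF => _ _ /(_ y Gy).
Qed.

Lemma convex_comb_mem F k (s : 'I_k -> V) (w : 'I_k -> R) :
  is_convex F -> (forall i, F (s i)) -> (forall i, 0 <= w i) ->
  \sum_(i < k) w i = 1 -> F (\sum_(i < k) w i *: s i).
Proof.
move=> vF; elim: k s w => [|k IH] s w Fs w0 w1.
  by move: w1; rewrite big_ord0 => /eqP; rewrite eq_sym oner_eq0.
move: w1; rewrite !big_ord_recr /=.
set t := \sum_(i < k) _ => w1.
have t0 : 0 <= t by apply: sumr_ge0.
have wt : w ord_max = 1 - t by rewrite -w1 addrAC subrr add0r.
have [tz|tnz] := eqVneq t 0.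
  rewrite big1 ?add0r ?wt ?tz ?subr0 ?scale1r // => i _.
  move/eqP: tz; rewrite psumr_eq0 // => /allP/(_ i (mem_index_enum _))/eqP ->.
  by rewrite scale0r.
have tp : 0 < t by rewrite lt_def tnz t0.
have -> : \sum_(i < k) w (widen_ord (leqnSn k) i) *: s (widen_ord (leqnSn k) i) =
    t *: \sum_(i < k) (w (widen_ord (leqnSn k) i) / t) *: s (widen_ord (leqnSn k) i).
  rewrite scaler_sumr; apply: eq_bigr => i _; rewrite scalerA.
  by rewrite mulrCA divff ?mulr1.
have t_eq : t = 1 - w ord_max by rewrite wt opprB addrC subrK.
rewrite addrC {1}t_eq; apply: vF; rewrite ?w0 ?Fs //; last by rewrite wt lerBlDr lerDl.
apply: IH => [i|i|]; rewrite ?Fs ?divr_ge0 ?w0 //.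
by rewrite -mulr_suml divff.
Qed.

Lemma convex_normalized_comb_mem F k (s : 'I_k -> V) (w : 'I_k -> R) :
  is_convex F -> (forall i, F (s i)) -> (forall i, 0 <= w i) ->
  0 < \sum_(i < k) w i ->
  F ((\sum_(i < k) w i)^-1 *: \sum_(i < k) w i *: s i).
Proof.
move=> vF Fs w0 wp; rewrite scaler_sumr.
under eq_bigr => i _ do rewrite scalerA mulrC.
apply: convex_comb_mem => // [i|]; first by rewrite divr_ge0 ?w0 ?ltW.
by rewrite -mulr_suml divff ?gt_eqF.
Qed.

(* Split an affine combination of points of F into its positive part p and
   negative part q, both normalised points of F; then p is a proper convex
   combination of y and q, so y lies in F by extremality. *)
Lemma face_setI_aff F G : is_face F G -> G `&` aff F `<=` F.
Proof.
move=> [_ vF FG eF] y [Gy [k [s [l [Fs l1 ye]]]]].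
pose lp i := Num.max (l i) 0; pose ln i := Num.max (- l i) 0.
have lp0 i : 0 <= lp i by rewrite le_max lexx orbT.
have ln0 i : 0 <= ln i by rewrite le_max lexx orbT.
have l_split i : l i = lp i - ln i.
  by rewrite /lp /ln; case: (leP 0 (l i)) => h; [rewrite (@max_r _ _ (- l i)) ?subr0 // oppr_le0
    | rewrite max_l ?sub0r ?opprK // lerNr oppr0 ltW].
pose P := \sum_(i < k) lp i; pose N := \sum_(i < k) ln i.
have PN : P = 1 + N by rewrite -l1 (eq_bigr _ (fun i _ => l_split i)) sumrB subrK.
have [Nz|Nnz] := eqVneq N 0.
  rewrite ye; apply: convex_comb_mem => // i; rewrite l_split.
  move/eqP: Nz; rewrite psumr_eq0 // => /allP/(_ i (mem_index_enum _))/eqP ->.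
  by rewrite subr0.
have Np : 0 < N by rewrite lt_def Nnz sumr_ge0.
have P1 : 1 < P by rewrite PN ltrDl.
have Pp : 0 < P := lt_trans ltr01 P1.
pose SP := \sum_(i < k) lp i *: s i; pose SN := \sum_(i < k) ln i *: s i.
have yS : y = SP - SN.
  by rewrite ye /SP /SN -sumrB; apply: eq_bigr => i _; rewrite l_split scalerBl.
have Fp : F (P^-1 *: SP) by apply: convex_normalized_comb_mem.
have Fq : F (N^-1 *: SN) by apply: convex_normalized_comb_mem.
have yq_comb : P^-1 *: SP = P^-1 *: y + (1 - P^-1) *: (N^-1 *: SN).
  have -> : 1 - P^-1 = N / P by rewrite PN; field; rewrite -PN gt_eqF.
  by rewrite yS scalerA mulrAC mulfV ?gt_eqF // mul1r scalerBr subrK.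
have := eF y (N^-1 *: SN) P^-1 Gy (FG _ Fq).
by rewrite invr_gt0 Pp invf_lt1 // -yq_comb => /(_ isT P1 Fp) [].
Qed.

Definition lift x : 'rV[R]_(n + 1) := row_mx x (const_mx 1).

Definition rows_lift_in F k (M : 'M[R]_(k, n + 1)) :=
  forall i, F (lsubmx (row i M)) /\ rsubmx (row i M) = const_mx 1.

Lemma rows_lift_in_subset F G k (M : 'M[R]_(k, n + 1)) :
  F `<=` G -> rows_lift_in F M -> rows_lift_in G M.
Proof. by move=> FG rM i; have [/FG] := rM i. Qed.

Lemma rows_lift_in_col_mx F k (M : 'M[R]_(k, n + 1)) y :
  rows_lift_in F M -> F y -> rows_lift_in F (col_mx M (lift y)).
Proof.
move=> rM Fy i; rewrite -(@fintype.splitK k 1 i); case: (fintype.split i) => j /=.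
  by rewrite rowKu; apply: rM.
by rewrite rowKd /lift row_id row_mxKl row_mxKr.
Qed.

Lemma submx_lift_aff F k (M : 'M[R]_(k, n + 1)) y :
  rows_lift_in F M -> (lift y <= M)%MS -> aff F y.
Proof.
move=> rM /submxP [u yu]; exists k, (fun i => lsubmx (row i M)), (fun i => u 0 i).
split; first by move=> i; case: (rM i).
  have := congr1 (fun v => rsubmx v 0 0) yu.
  rewrite /lift row_mxKr mxE mulmx_sum_row linear_sum /= summxE => ->.
  by apply: eq_bigr => i _; rewrite linearZ /= mxE (proj2 (rM i)) mxE mulr1.
have := congr1 lsubmx yu.
by rewrite /lift row_mxKl mulmx_sum_row linear_sum /= => ->; apply: eq_bigr => i _; rewrite linearZ.
Qed.

Lemma rank_col_mx_gt p k (M : 'M[R]_(k, p)) (v : 'rV[R]_p) :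
  ~~ (v <= M)%MS -> (\rank M < \rank (col_mx M v))%N.
Proof.
move=> nv; apply: rank_ltmx; rewrite ltmxE col_mx_sub submx_refl (negbTE nv) andbT.
by have := submx_refl (col_mx M v); rewrite col_mx_sub => /andP[].
Qed.

Lemma face_proper_rank_lt F G k (M : 'M[R]_(k, n + 1)) :
  is_face F G -> G <> F -> rows_lift_in F M ->
  exists M' : 'M[R]_(k + 1, n + 1), rows_lift_in G M' /\ (\rank M < \rank M')%N.
Proof.
move=> FG GF rM; have FsubG : F `<=` G by case: FG.
have [y [Gy nFy]] : exists y, G y /\ ~ F y.
  apply: contrapT => noy; apply: GF; apply/seteqP; split => // y Gy.
  by apply: contrapT => nFy; apply: noy; exists y.
exists (col_mx M (lift y)); split.
  by apply: rows_lift_in_col_mx => //; apply: rows_lift_in_subset rM.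
apply/rank_col_mx_gt/negP => /(submx_lift_aff rM) Fy.
by apply: nFy; apply: (face_setI_aff FG).
Qed.

Lemma exists_maximal_face G C : is_face G C -> G <> C ->
  exists F, is_maximal_face F C /\ is_face G F.
Proof.
move=> GC GnC.
pose P j := `[< exists F k (M : 'M[R]_(k, n + 1)),
  [/\ is_face F C, is_face G F, F <> C, rows_lift_in F M & \rank M = j] >].
have exP : exists j, P j.
  exists 0%N; apply/asboolP; exists G, 0%N, 0; split => //; first exact: face_self GC.
  - by case.
  - by rewrite mxrank0.
have ubP j : P j -> (j <= n + 1)%N.
  by move=> /asboolP [F [k [M [_ _ _ _ <-]]]]; apply: rank_leq_col.
case: (ex_maxnP exP ubP) => j /asboolP [F [k [M [FC GF FnC rM <-]]]] jmax.
exists F; split => //; split => // -[Fh [FhC FhnF FhnC FFh]].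
have [M' [rM' lt_rank]] := face_proper_rank_lt FFh FhnF rM.
suff : (\rank M' <= \rank M)%N by rewrite leqNgt lt_rank.
apply: jmax; apply/asboolP; exists Fh, (k + 1)%N, M'; split => //.
exact: face_trans GF FFh.
Qed.

End Faces.

Theorem proposition3p6 (R : realType) (n : nat) (C : set 'rV[R]_n) :
  closed C -> is_convex C ->
  [/\ (forall F Fh : set 'rV[R]_n,
         is_face Fh F -> is_face F C -> amenable_face F C ->
         (amenable_face Fh F <-> amenable_face Fh C)),
      (amenable_set C -> forall F, is_face F C -> amenable_set F) &
      (amenable_set C <->
         forall F, is_maximal_face F C -> amenable_face F C /\ amenable_set F)].
Proof.
move=> cC vC.
have inherit : amenable_set C -> forall F, is_face F C -> amenable_set F.
  move=> aC F FC G GF; apply: (amenable_face_restrict GF FC).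
  by apply: aC; apply: face_trans GF FC.
split => //.
- move=> F Fh FhF FC aF; split => [aFh|]; first exact: amenable_face_trans aFh FC aF.
  exact: amenable_face_restrict.
- split=> [aC F [FC _ _]|amax G GC]; first by split; [exact: aC | exact: inherit].
  have [->|GnC] := pselect (G = C); first exact: amenable_face_refl.
  have [F [Fmax GF]] := exists_maximal_face GC GnC.
  have [aF aFset] := amax F Fmax; case: Fmax => FC _ _.
  exact: amenable_face_trans (aFset G GF) FC aF.
Qed.
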